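(* Let $\kappa$ be an infinite cardinal and let $\mathscr{U}$ be a uniform ultrafilter over $\kappa$ with ${\rm Ch}(\mathscr{U})=\mu$. Then $\operatorname{cf}(\mu)>\omega$. Consequently $\operatorname{cf}(\mathfrak{u}_\kappa)>\omega$ for every infinite cardinal $\kappa$.
   Context: An ultrafilter $\mathscr{U}$ over $\kappa$ is uniform if every element of $\mathscr{U}$ has cardinality $\kappa$. A base for $\mathscr{U}$ is a collection $\mathcal{B}\subseteq\mathscr{U}$ such that every $A\in\mathscr{U}$ contains some $B\in\mathcal{B}$; ${\rm Ch}(\mathscr{U})$ is the minimal cardinality of a base for $\mathscr{U}$. The ultrafilter number $\mathfrak{u}_\kappa$ is the minimum of ${\rm Ch}(\mathscr{U})$ over all uniform ultrafilters $\mathscr{U}$ over $\kappa$. *)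

(* cardinals are represented by types, compared via injections.
   Subsets of kappa are predicates K -> Prop. *)
From Stdlib Require Import Classical.

Definition injective {X Y : Type} (f : X -> Y) : Prop :=
  forall x y, f x = f y -> x = y.

Definition le_card (X Y : Type) : Prop := exists f : X -> Y, injective f.
Definition lt_card (X Y : Type) : Prop := le_card X Y /\ ~ le_card Y X.

Definition infinite_type (X : Type) : Prop := le_card nat X.

(* cf(|M|) > omega, for the cardinal |M|: |M| is infinite (so cf(|M|) >= omega)
   and |M| is not the union of countably many subsets of cardinality < |M|
   (which, for infinite |M|, is exactly the failure of cf(|M|) = omega). *)
Definition cf_gt_omega (M : Type) : Prop :=
  infinite_type M /\
  forall P : nat -> M -> Prop,
    (forall n, lt_card {m : M | P n m} M) ->
    ~ (forall m : M, exists n, P n m).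

Definition ultrafilter {K : Type} (U : (K -> Prop) -> Prop) : Prop :=
  U (fun _ => True) /\
  ~ U (fun _ => False) /\
  (forall A B : K -> Prop, U A -> (forall x, A x -> B x) -> U B) /\
  (forall A B : K -> Prop, U A -> U B -> U (fun x => A x /\ B x)) /\
  (forall A : K -> Prop, U A \/ U (fun x => ~ A x)).

Definition uniform {K : Type} (U : (K -> Prop) -> Prop) : Prop :=
  forall A, U A -> le_card K {x : K | A x}.

Definition is_base {K : Type} (U : (K -> Prop) -> Prop)
    (B : (K -> Prop) -> Prop) : Prop :=
  (forall A, B A -> U A) /\
  (forall A, U A -> exists C, B C /\ forall x, C x -> A x).

(* B is a base for U of minimal cardinality, i.e. |B| = Ch(U) *)
Definition min_base {K : Type} (U : (K -> Prop) -> Prop)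
    (B : (K -> Prop) -> Prop) : Prop :=
  is_base U B /\
  forall B', is_base U B' -> le_card {A | B A} {A | B' A}.

(* B is a base of some uniform ultrafilter U with |B| = u_kappa *)
Definition witnesses_u {K : Type} (U : (K -> Prop) -> Prop)
    (B : (K -> Prop) -> Prop) : Prop :=
  ultrafilter U /\ uniform U /\ is_base U B /\
  forall U' B' : (K -> Prop) -> Prop, ultrafilter U' -> uniform U' -> is_base U' B' ->
    le_card {A | B A} {A | B' A}.

From Stdlib Require Import Classical ClassicalEpsilon ProofIrrelevance Arith Lia.

(* Let B be a base of U of minimal size and suppose B = U_n P_n with every P_n
   smaller than B.  For a set S in U the traces on S of the members of P_n are
   too few to form a base, so some S' in U with S' ⊆ S fails to contain any of
   them: every member of P_n meets S \ S'.  Iterating, with P_n used at steps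
   2n and 2n+1, gives S_0 ⊇ S_1 ⊇ ... in U such that the union of the even
   shells S_k \ S_(k+1) and the union of the odd shells both meet every member
   of B.  A set meeting every member of a base of an ultrafilter belongs to it,
   so U contains two disjoint sets, which is absurd.  The base is infinite
   because a uniform ultrafilter over an infinite set contains no singleton,
   so each member of U contains a member of B omitting one of its points. *)

Lemma le_card_trans (X Y Z : Type) : le_card X Y -> le_card Y Z -> le_card X Z.
Proof.
  intros [f Hf] [g Hg]. exists (fun x => g (f x)).
  intros x y E. exact (Hf _ _ (Hg _ _ E)).
Qed.

Lemma le_card_of_surjective (X Y : Type) (f : Y -> X) :
  (forall x, exists y, f y = x) -> le_card X Y.
Proof.
  intro Hsurj. destruct (choice _ Hsurj) as [g Hg].
  exists g. intros x y E. rewrite <- (Hg x), <- (Hg y), E. reflexivity.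
Qed.

Section DescendingSequence.

Context {K : Type}.
Variable C : nat -> K -> Prop.
Hypothesis C_step : forall k x, C (S k) x -> C k x.

Definition shell (k : nat) (x : K) : Prop := C k x /\ ~ C (S k) x.

Lemma descending_antitone i j : i <= j -> forall x, C j x -> C i x.
Proof. induction 1; auto. Qed.

Lemma shell_disjoint i j x : i < j -> shell i x -> shell j x -> False.
Proof.
  intros Hij [_ Hi] [Hj _]. exact (Hi (descending_antitone _ _ Hij x Hj)).
Qed.

Lemma descending_injective : (forall k, exists x, shell k x) -> injective C.
Proof.
  intro Hshell.
  assert (Hlt : forall i j, i < j -> C i <> C j).
  { intros i j Hij E. destruct (Hshell i) as [x [Hi Hni]].
    apply Hni, (descending_antitone _ _ Hij). rewrite <- E. exact Hi. }
  intros i j E. destruct (Nat.lt_total i j) as [H | [H | H]]; auto; exfalso.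
  - exact (Hlt _ _ H E).
  - exact (Hlt _ _ H (eq_sym E)).
Qed.

End DescendingSequence.

Section Ultrafilter.

Context {K : Type}.
Variable U : (K -> Prop) -> Prop.
Hypothesis HU : ultrafilter U.

Lemma ultrafilter_nonempty A : U A -> exists x, A x.
Proof.
  destruct HU as [_ [U_nF [U_mono _]]]. intro HA. apply NNPP; intro Hempty.
  apply U_nF, (U_mono A); [exact HA|].
  intros x Hx. exact (Hempty (ex_intro _ x Hx)).
Qed.

Lemma ultrafilter_disjoint A A' :
  U A -> U A' -> (forall x, A x -> A' x -> False) -> False.
Proof.
  destruct HU as [_ [_ [_ [U_int _]]]]. intros HA HA' Hdisj.
  destruct (ultrafilter_nonempty _ (U_int _ _ HA HA')) as [x [Hx Hx']].
  exact (Hdisj x Hx Hx').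
Qed.

Lemma ultrafilter_meets_base B E :
  is_base U B -> (forall A, B A -> exists x, A x /\ E x) -> U E.
Proof.
  destruct HU as [_ [_ [_ [_ U_ult]]]]. intros [_ Hbase] Hmeets.
  destruct (U_ult E) as [HE | HnE]; [exact HE|].
  destruct (Hbase _ HnE) as [A [HA HAE]]. destruct (Hmeets A HA) as [x [Hx HEx]].
  exfalso. exact (HAE x Hx HEx).
Qed.

Lemma descending_sequence (R : nat -> (K -> Prop) -> (K -> Prop) -> Prop) :
  (forall n A, U A -> exists A', U A' /\ (forall x, A' x -> A x) /\ R n A A') ->
  exists C : nat -> K -> Prop,
    forall k, U (C k) /\ (forall x, C (S k) x -> C k x) /\ R k (C k) (C (S k)).
Proof.
  intro Hstep.
  assert (Hchoice : forall p : nat * (K -> Prop), exists A',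
            U (snd p) -> U A' /\ (forall x, A' x -> snd p x) /\ R (fst p) (snd p) A').
  { intros [n A]. destruct (classic (U A)) as [HA | HnA].
    - destruct (Hstep n A HA) as [A' HA']. exists A'. auto.
    - exists A. contradiction. }
  destruct (choice _ Hchoice) as [F HF].
  pose (C := fix C k := match k with 0 => fun _ : K => True | S k => F (k, C k) end).
  assert (HC : forall k, U (C k)).
  { induction k as [|k IHk]; [exact (proj1 HU) | exact (proj1 (HF (k, C k) IHk))]. }
  exists C. intro k. exact (conj (HC k) (proj2 (HF (k, C k) (HC k)))).
Qed.

End Ultrafilter.

Section MinimalBase.

Context {K : Type}.
Variables U B : (K -> Prop) -> Prop.
Hypotheses (HU : ultrafilter U) (HB : is_base U B)
  (B_min : forall B', is_base U B' -> le_card {A | B A} {A | B' A}).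

Lemma min_base_shrink (Q : {A | B A} -> Prop) :
  ~ le_card {A | B A} {m | Q m} ->
  forall A, U A -> exists A', U A' /\ (forall x, A' x -> A x) /\
    forall m, Q m -> exists x, proj1_sig m x /\ A x /\ ~ A' x.
Proof.
  intros Hsmall A HA. apply NNPP; intro Hno. apply Hsmall.
  destruct HU as [_ [_ [_ [U_int _]]]].
  pose (trace := fun (m : {A | B A}) x => proj1_sig m x /\ A x).
  pose (traces := fun A' => exists m, Q m /\ A' = trace m).
  assert (Htraces : is_base U traces).
  { split.
    - intros A' [m [_ ->]]. exact (U_int _ _ (proj1 HB _ (proj2_sig m)) HA).
    - intros A' HA'. apply NNPP; intro Hnot. apply Hno.
      exists (fun x => A' x /\ A x). split; [exact (U_int _ _ HA' HA)|]. split; [tauto|].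
      intros m Hm. apply NNPP; intro Hinside. apply Hnot.
      exists (trace m). split; [exists m; auto|].
      intros x [Hmx HAx]. apply NNPP; intro HnA'x. apply Hinside. exists x. tauto. }
  apply (le_card_trans _ _ _ (B_min _ Htraces)).
  apply (le_card_of_surjective _ _ (fun m : {m | Q m} =>
           exist traces (trace (proj1_sig m))
             (ex_intro _ (proj1_sig m) (conj (proj2_sig m) eq_refl)))).
  intros [A' [m [Hm ->]]]. exists (exist _ m Hm). apply subset_eq_compat. reflexivity.
Qed.

Lemma min_base_not_countable_union (P : nat -> {A | B A} -> Prop) :
  (forall n, ~ le_card {A | B A} {m | P n m}) -> ~ (forall m, exists n, P n m).
Proof.
  intros Hsmall Hcover.
  destruct (descending_sequence U HU (fun k A A' =>
              forall m, P (Nat.div2 k) m -> exists x, proj1_sig m x /\ A x /\ ~ A' x))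
    as [C HC].
  { intros k A HA. exact (min_base_shrink _ (Hsmall _) A HA). }
  assert (C_step : forall k x, C (S k) x -> C k x) by (intro k; apply (HC k)).
  assert (Hshells : forall f : nat -> nat, (forall n, Nat.div2 (f n) = n) ->
            U (fun x => exists n, shell C (f n) x)).
  { intros f Hf. apply (ultrafilter_meets_base U HU B _ HB). intros A HA.
    destruct (Hcover (exist _ A HA)) as [n Hn]. rewrite <- (Hf n) in Hn.
    destruct (proj2 (proj2 (HC (f n))) _ Hn) as [x [Hx Hshell]].
    exists x. split; [exact Hx | exists n; exact Hshell]. }
  apply (ultrafilter_disjoint U HU _ _
           (Hshells _ Nat.div2_double) (Hshells _ Nat.div2_succ_double)).
  intros x [n Hn] [k Hk].
  destruct (Nat.lt_ge_cases (2 * n) (S (2 * k))) as [H | H].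
  - exact (shell_disjoint C C_step _ _ _ H Hn Hk).
  - assert (H' : S (2 * k) < 2 * n) by lia.
    exact (shell_disjoint C C_step _ _ _ H' Hk Hn).
Qed.

End MinimalBase.

Lemma uniform_not_singleton (K : Type) (U : (K -> Prop) -> Prop) :
  infinite_type K -> uniform U -> forall x0 : K, ~ U (fun x => x = x0).
Proof.
  intros [g Hg] Hunif x0 Hx0. destruct (Hunif _ Hx0) as [f Hf].
  assert (E : f (g 0) = f (g 1)).
  { destruct (f (g 0)) as [y Hy], (f (g 1)) as [z Hz].
    apply subset_eq_compat. congruence. }
  discriminate (Hg _ _ (Hf _ _ E)).
Qed.

Lemma uniform_base_infinite (K : Type) (U B : (K -> Prop) -> Prop) :
  infinite_type K -> ultrafilter U -> uniform U -> is_base U B ->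
  infinite_type {A | B A}.
Proof.
  intros HK HU Hunif HB.
  destruct (descending_sequence U HU
              (fun _ A A' => B A' /\ exists x, A x /\ ~ A' x)) as [C HC].
  { intros _ A HA. destruct (ultrafilter_nonempty U HU A HA) as [x0 Hx0].
    destruct HU as [_ [_ [_ [U_int U_ult]]]].
    destruct (U_ult (fun x => x = x0)) as [Hsing | Hco].
    { destruct (uniform_not_singleton K U HK Hunif x0 Hsing). }
    destruct (proj2 HB _ (U_int _ _ HA Hco)) as [A' [HA' Hsub]].
    exists A'. split; [exact (proj1 HB _ HA')|].
    split; [intros x Hx; exact (proj1 (Hsub x Hx))|].
    split; [exact HA'|]. exists x0. split; [exact Hx0|].
    intro Hx0'. exact (proj2 (Hsub _ Hx0') eq_refl). }
  assert (C_step : forall k x, C (S k) x -> C k x) by (intro k; apply (HC k)).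
  exists (fun n => exist B (C (S n)) (proj1 (proj2 (proj2 (HC n))))).
  intros i j E. apply (f_equal (@proj1_sig _ _)) in E. simpl in E.
  apply eq_add_S, (descending_injective C C_step); [|exact E].
  intro k. exact (proj2 (proj2 (proj2 (HC k)))).
Qed.

Lemma min_base_cf_gt_omega (K : Type) (U B : (K -> Prop) -> Prop) :
  infinite_type K -> ultrafilter U -> uniform U -> is_base U B ->
  (forall B', is_base U B' -> le_card {A | B A} {A | B' A}) ->
  cf_gt_omega {A | B A}.
Proof.
  intros HK HU Hunif HB Hmin. split.
  - exact (uniform_base_infinite K U B HK HU Hunif HB).
  - intros P HP. apply (min_base_not_countable_union U B HU HB Hmin P).
    intro n. exact (proj2 (HP n)).
Qed.

Theorem mainTheorem2 :
  (forall (K : Type) (U : (K -> Prop) -> Prop) (B : (K -> Prop) -> Prop),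
      infinite_type K -> ultrafilter U -> uniform U -> min_base U B ->
      cf_gt_omega {A | B A}) /\
  (forall (K : Type) (U : (K -> Prop) -> Prop) (B : (K -> Prop) -> Prop),
      infinite_type K -> witnesses_u U B ->
      cf_gt_omega {A | B A}).
Proof.
  split.
  - intros K U B HK HU Hunif [HB Hmin].
    exact (min_base_cf_gt_omega K U B HK HU Hunif HB Hmin).
  - intros K U B HK [HU [Hunif [HB Hmin]]].
    apply (min_base_cf_gt_omega K U B HK HU Hunif HB).
    intros B' HB'. exact (Hmin U B' HU Hunif HB').
Qed.
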